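(* Let $n>1$ be an odd perfect square. Then $C_{S(n)^*}\le 9$.
   Context: For a natural number $n$, $\mathbb Z_n=\mathbb Z/n\mathbb Z$, $S(n)=\{x^2:x\in\mathbb Z_n\}$, $S(n)^*=S(n)\setminus\{0\}$. For $A\subseteq\mathbb Z_n$, a sequence $(y_1,\dots,y_t)$ ($t\ge1$) in $\mathbb Z_n$ is an $A$-weighted zero-sum sequence if there exist $a_1,\dots,a_t\in A$ with $\sum a_iy_i=0$. $C_A(n)$ is the least positive integer $t$ such that every sequence of length $t$ in $\mathbb Z_n$ has a nonempty subsequence of consecutive terms that is an $A$-weighted zero-sum sequence; $C_{S(n)^*}=C_{S(n)^*}(n)$. *)

From mathcomp Require Import all_boot all_order all_algebra.
Set Implicit Arguments. Unset Strict Implicit. Unset Printing Implicit Defensive.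
Import GRing.Theory.
Local Open Scope ring_scope.

(* S(n) = squares in Z_n ; S(n)^* = nonzero squares.  Used with 1 < n so 'Z_n is Z/nZ. *)
Definition sq_set (n : nat) : {set 'Z_n} := [set x * x | x : 'Z_n].
Definition sq_star (n : nat) : {set 'Z_n} := sq_set n :\ 0.

Definition weighted_zero_sum (n : nat) (A : {set 'Z_n}) (y : seq 'Z_n) : Prop :=
  exists a : seq 'Z_n, size a = size y /\ all (fun x => x \in A) a /\
    \sum_(i < size y) a`_i * y`_i = 0.

Definition C_property (n : nat) (A : {set 'Z_n}) (t : nat) : Prop :=
  forall y : seq 'Z_n, size y = t ->
    exists i j : nat, (i < j <= t)%N /\ weighted_zero_sum A (drop i (take j y)).

(* C_A(n) <= k : the least positive t with C_property is at most k *)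
Definition C_le (n : nat) (A : {set 'Z_n}) (k : nat) : Prop :=
  exists t : nat, (1 <= t <= k)%N /\ C_property A t.

From mathcomp Require Import all_boot all_order all_algebra.
From mathcomp Require Import zify ring.
Set Implicit Arguments. Unset Strict Implicit. Unset Printing Implicit Defensive.
Import GRing.Theory.

(* Write n = m^2 and let p be a prime factor of m, so p is odd.  If a block
   f_i, ..., f_(j-1) of naturals admits weights s_k prime to p with
   p^2 | sum s_k^2 f_k, then the weights (m/p s_k)^2 are nonzero squares mod n
   annihilating it; so it suffices to find such a block among any nine terms.
   Since a u^2 + c v^2 takes every value in F_p, any three p-units x1, x2, x3
   admit unit squares making x1 + x2, x2 + x3 or x1 + x2 + x3 (weighted)
   vanish mod p.  If three consecutive terms are exactly divisible by p, apply
   this to their quotients by p.  Otherwise each of the windows [0,3), [3,6),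
   [6,9) contains a p-unit, hence there are three consecutive p-units with only
   multiples of p in between; this gives a block vanishing mod p that contains
   a unit, and Hensel's lemma lifts it to p^2. *)

Definition sq_zero_block (d p : nat) (f : nat -> nat) (i j : nat) : Prop :=
  exists2 s : nat -> nat, (forall k, (i <= k < j)%N -> ~~ (p %| s k)) &
    d %| \sum_(i <= k < j) s k ^ 2 * f k.

Lemma next_witness (P : pred nat) (k u : nat) : (k < u)%N -> P u ->
  exists v, [/\ (k < v <= u)%N, P v & forall w, (k < w < v)%N -> ~~ P w].
Proof.
move=> k_lt_u Pu.
have [|v /andP [k_lt_v Pv] v_min] := find_ex_minn (P := fun v => (k < v)%N && P v).
  by exists u; rewrite k_lt_u.
exists v; split => //; first by rewrite k_lt_v v_min // k_lt_u.
move=> w /andP [k_lt_w w_lt_v]; apply: contraTN w_lt_v => Pw.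
by rewrite -leqNgt v_min // k_lt_w.
Qed.

Lemma sum_nat_ends (a b : nat) (F : nat -> nat) : (a < b)%N ->
  \sum_(a <= k < b.+1) F k = F a + \sum_(a.+1 <= k < b) F k + F b.
Proof. by move=> ab; rewrite big_ltn ?big_nat_recr //=; lia. Qed.

Lemma dvdn_sum_nat (d a b : nat) (F : nat -> nat) :
  (forall k, (a <= k < b)%N -> d %| F k) -> d %| \sum_(a <= k < b) F k.
Proof. by move=> dF; rewrite big_seq; apply: dvdn_sum => k; rewrite mem_index_iota; apply: dF. Qed.

Section OddPrime.

Variable p : nat.
Hypotheses (p_pr : prime p) (p_gt2 : (2 < p)%N).

Lemma Fp_natr_eq0 (k : nat) : ((k%:R : 'F_p) == 0)%R = (p %| k).
Proof. by rewrite (dvdn_pcharf (pchar_Fp p_pr)). Qed.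

Lemma Fp_sqr_natr_inj (k l : nat) : (k + l < p)%N ->
  ((k%:R : 'F_p) ^+ 2 = l%:R ^+ 2)%R -> k = l.
Proof.
move=> kl_lt /eqP; rewrite -subr_eq0 subr_sqr mulf_eq0 => /orP [].
  rewrite subr_eq0 => /eqP /(congr1 (@nat_of_ord _)).
  by rewrite !val_Fp_nat // !modn_small //; lia.
by rewrite -natrD Fp_natr_eq0 => /dvdn_leq; lia.
Qed.

(* The values [a u^2] and [b - c v^2] for [u, v <= (p - 1)/2] are two families
   of [(p + 1)/2] distinct elements of ['F_p], so they must meet. *)
Lemma Fp_diag_form_onto (a b c : 'F_p) : a != 0%R -> c != 0%R ->
  exists u v : nat, [/\ (u < p)%N, (v < p)%N & (a * u%:R ^+ 2 + c * v%:R ^+ 2)%R = b].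
Proof.
move=> a_neq0 c_neq0.
pose h := p.+1./2.
have hh : (h + h = p.+1)%N.
  rewrite addnn /h even_halfK //= negbK.
  by case: (even_prime p_pr) p_gt2 => [->|].
have sqr_inj (k l : 'I_h) : ((k%:R : 'F_p) ^+ 2 = l%:R ^+ 2)%R -> k = l.
  move=> /Fp_sqr_natr_inj kl; apply: val_inj; apply: kl.
  by have := ltn_ord k; have := ltn_ord l; lia.
pose A := [set (a * k%:R ^+ 2)%R | k : 'I_h].
pose B := [set (b - c * k%:R ^+ 2)%R | k : 'I_h].
have card_A : #|A| = h.
  by rewrite card_imset ?card_ord // => k l /(mulfI a_neq0) /sqr_inj.
have card_B : #|B| = h.
  by rewrite card_imset ?card_ord // => k l /addrI /oppr_inj /(mulfI c_neq0) /sqr_inj.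
have card_AB : (#|A :|: B| <= p)%N by apply: leq_trans (max_card _) _; rewrite card_Fp.
have := cardsUI A B; rewrite card_A card_B => card_sum.
have /card_gt0P [_ /setIP [/imsetP [u _ ->] /imsetP [v _ /eqP]]] :
  (0 < #|A :&: B|)%N by lia.
rewrite eq_sym subr_eq => /eqP ->.
by exists u, v; split => //; [have := ltn_ord u | have := ltn_ord v]; lia.
Qed.

Lemma unit_sqr_zero_sum3 (x1 x2 x3 : nat) :
  ~~ (p %| x1) -> ~~ (p %| x2) -> ~~ (p %| x3) ->
  exists c1 c2 c3, [/\ ~~ (p %| c1), ~~ (p %| c2), ~~ (p %| c3) &
   [\/ p %| c1 ^ 2 * x1 + c2 ^ 2 * x2, p %| c2 ^ 2 * x2 + c3 ^ 2 * x3
     | p %| c1 ^ 2 * x1 + c2 ^ 2 * x2 + c3 ^ 2 * x3]].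
Proof.
rewrite -!Fp_natr_eq0 => x1_neq0 x2_neq0 x3_neq0.
have [u [v [u_lt v_lt uv_eq]]] := Fp_diag_form_onto (- x2%:R)%R x1_neq0 x3_neq0.
have {uv_eq} uv_eq0 : (x1%:R * u%:R ^+ 2 + x2%:R + x3%:R * v%:R ^+ 2 = 0 :> 'F_p)%R.
  by rewrite addrAC uv_eq addNr.
have unit_nat k : (0 < k < p)%N -> ~~ (p %| k) by move=> ?; apply/negP => /dvdn_leq; lia.
case: (posnP u) => [u0 | u_gt0]; case: (posnP v) => [v0 | v_gt0];
  rewrite ?u0 ?v0 ?mulr0n ?expr0n ?mulr0 ?add0r ?addr0 in uv_eq0.
- by rewrite uv_eq0 eqxx in x2_neq0.
- exists 1, 1, v; split; rewrite ?Euclid_dvd1 //; first by apply: unit_nat; lia.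
  apply: Or32; rewrite -Fp_natr_eq0 natrD !natrM.
  by apply/eqP; rewrite -uv_eq0; ring.
- exists u, 1, 1; split; rewrite ?Euclid_dvd1 //; first by apply: unit_nat; lia.
  apply: Or31; rewrite -Fp_natr_eq0 natrD !natrM.
  by apply/eqP; rewrite -uv_eq0; ring.
- exists u, 1, v; split; rewrite ?Euclid_dvd1 //; try by apply: unit_nat; lia.
  apply: Or33; rewrite -Fp_natr_eq0 !natrD !natrM.
  by apply/eqP; rewrite -uv_eq0; ring.
Qed.

Lemma sq_zero_block1 (d : nat) (f : nat -> nat) (k : nat) :
  d %| f k -> sq_zero_block d p f k k.+1.
Proof.
move=> dvd_fk; exists (fun _ => 1%N); last by rewrite big_nat1 exp1n mul1n.
by move=> _ _; rewrite Euclid_dvd1.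
Qed.

Lemma sq_zero_block_divn (f : nat -> nat) (i j : nat) :
  (forall k, (i <= k < j)%N -> p %| f k) ->
  sq_zero_block p p (fun k => f k %/ p) i j -> sq_zero_block (p ^ 2) p f i j.
Proof.
move=> dvd_f [s s_unit dvd_sum]; exists s => //.
have -> : \sum_(i <= k < j) s k ^ 2 * f k = (\sum_(i <= k < j) s k ^ 2 * (f k %/ p)) * p.
  rewrite big_distrl /= big_seq [RHS]big_seq; apply: eq_bigr => k.
  by rewrite mem_index_iota -mulnA => /dvd_f /divnK ->.
by rewrite expnS expn1 dvdn_pmul2r ?prime_gt0.
Qed.

(* Hensel: replacing [s u] by [s u + p t] changes the sum by [2 s u f u p t]
   modulo [p^2], and [2 s u f u] is invertible mod [p]. *)
Lemma sq_zero_block_lift (f : nat -> nat) (i j u : nat) :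
  (i <= u < j)%N -> ~~ (p %| f u) ->
  sq_zero_block p p f i j -> sq_zero_block (p ^ 2) p f i j.
Proof.
move=> u_in fu_unit [s s_unit /dvdnP [T sum_eq]].
set c := 2 * s u * f u.
have c_coprime : coprime p c.
  rewrite prime_coprime // !Euclid_dvdM // (negPf fu_unit) (negPf (s_unit _ u_in)) !orbF.
  by apply/negP => /dvdn_leq; lia.
have [a _] := Bezoutl c (prime_gt0 p_pr); rewrite (eqP c_coprime) => /dvdnP [r ac_eq].
pose t := a * T.
exists (fun k => if k == u then s u + p * t else s k).
  move=> k k_in; case: eqP => [_|_]; last exact: s_unit.
  by rewrite dvdn_addl ?s_unit // dvdn_mulr.
have u_iota : u \in index_iota i j by rewrite mem_index_iota.
move: sum_eq; rewrite !(bigD1_seq u) ?iota_uniq //= eqxx => sum_eq.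
rewrite (eq_bigr (fun k => s k ^ 2 * f k)) => [|k /negbTE -> //].
set R := \sum_(_ <- _ | _) _ in sum_eq *.
have -> : (s u + p * t) ^ 2 * f u + R = (s u ^ 2 * f u + R) + p * t * c + p ^ 2 * (t ^ 2 * f u).
  by rewrite /c; ring.
rewrite sum_eq.
have -> : T * p + p * t * c = T * p * (r * p) by rewrite -ac_eq /t; ring.
have -> : T * p * (r * p) = p ^ 2 * (T * r) by ring.
by rewrite -mulnDr dvdn_mulr.
Qed.

Lemma sq_zero_block_consecutive_units (f : nat -> nat) (k1 k2 k3 : nat) :
  (k1 < k2 < k3)%N -> ~~ (p %| f k1) -> ~~ (p %| f k2) -> ~~ (p %| f k3) ->
  (forall k, (k1 < k < k2)%N -> p %| f k) -> (forall k, (k2 < k < k3)%N -> p %| f k) ->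
  exists i j, [/\ (k1 <= i < j)%N, (j <= k3.+1)%N, ~~ (p %| f i) & sq_zero_block p p f i j].
Proof.
move=> /andP [k12 k23] f1 f2 f3 between12 between23.
have k13 := ltn_trans k12 k23.
have [c1 [c2 [c3 [c1_unit c2_unit c3_unit zero_sum]]]] := unit_sqr_zero_sum3 f1 f2 f3.
pose s k := if k == k1 then c1 else if k == k2 then c2 else if k == k3 then c3 else 1.
have s1 : s k1 = c1 by rewrite /s eqxx.
have s2 : s k2 = c2 by rewrite /s eqxx (gtn_eqF k12).
have s3 : s k3 = c3 by rewrite /s eqxx (gtn_eqF k13) (gtn_eqF k23).
have s_unit k : ~~ (p %| s k).
  by rewrite /s; do 3 case: eqP => _ //; rewrite Euclid_dvd1.
have mid12 : p %| \sum_(k1.+1 <= k < k2) s k ^ 2 * f k.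
  by apply: dvdn_sum_nat => k k_in; rewrite dvdn_mull // between12.
have mid23 : p %| \sum_(k2.+1 <= k < k3) s k ^ 2 * f k.
  by apply: dvdn_sum_nat => k k_in; rewrite dvdn_mull // between23.
case: zero_sum => zero_sum.
- exists k1, k2.+1; split; rewrite ?leqnn ?ltnS ?(ltnW k12) ?(ltnW k23) //.
  by exists s => //; rewrite sum_nat_ends // s1 s2 addnAC dvdn_add.
- exists k2, k3.+1; split; rewrite ?leqnn ?ltnS ?(ltnW k12) ?(ltnW k23) //.
  by exists s => //; rewrite sum_nat_ends // s2 s3 addnAC dvdn_add.
- exists k1, k3.+1; split; rewrite ?leqnn ?ltnS ?(ltnW k13) //.
  exists s => //; rewrite sum_nat_ends // (@big_cat_nat _ _ _ k2) ?(ltnW k23) //.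
  rewrite (@big_ltn _ _ _ k2 k3) //= s1 s2 s3.
  move: mid12 mid23; set m12 := \sum_(_ <= _ < k2) _; set m23 := \sum_(_ <= _ < k3) _.
  move=> mid12 mid23.
  have -> : c1 ^ 2 * f k1 + (m12 + (c2 ^ 2 * f k2 + m23)) + c3 ^ 2 * f k3 =
            (c1 ^ 2 * f k1 + c2 ^ 2 * f k2 + c3 ^ 2 * f k3) + (m12 + m23) by ring.
  exact: dvdn_add zero_sum (dvdn_add mid12 mid23).
Qed.

Lemma sq_zero_block_units (f : nat -> nat) (u1 u2 u3 : nat) :
  (u1 < u2 < u3)%N -> ~~ (p %| f u1) -> ~~ (p %| f u2) -> ~~ (p %| f u3) ->
  exists i j, [/\ (u1 <= i < j)%N, (j <= u3.+1)%N & sq_zero_block (p ^ 2) p f i j].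
Proof.
move=> /andP [u12 u23] f1 f2 f3.
pose p_unit k := ~~ (p %| f k).
have [k2 [/andP [u1k2 k2u2] f_k2 between12]] := @next_witness p_unit _ _ u12 f2.
have [k3 [/andP [k2k3 k3u3] f_k3 between23]] :=
  @next_witness p_unit _ _ (leq_ltn_trans k2u2 u23) f3.
have k_lt : (u1 < k2 < k3)%N by rewrite u1k2 k2k3.
have mult12 k : (u1 < k < k2)%N -> p %| f k by move/between12; rewrite negbK.
have mult23 k : (k2 < k < k3)%N -> p %| f k by move/between23; rewrite negbK.
have [i [j [/andP [u1i ij] j_le f_i block]]] :=
  sq_zero_block_consecutive_units k_lt f1 f_k2 f_k3 mult12 mult23.
exists i, j; split; [by rewrite u1i | by apply: leq_trans j_le _ | ].
by apply: (sq_zero_block_lift (u := i)) f_i block; rewrite leqnn ij.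
Qed.

Lemma sq_zero_block_multiples (f : nat -> nat) (w : nat) :
  (forall k, (w <= k < w + 3)%N -> p %| f k /\ ~~ (p ^ 2 %| f k)) ->
  exists i j, [/\ (w <= i < j)%N, (j <= w + 3)%N & sq_zero_block (p ^ 2) p f i j].
Proof.
move=> exact_mult.
have quot_unit k : (w <= k < w + 3)%N -> ~~ (p %| f k %/ p).
  by move=> /exact_mult [dvd_fk ndvd_fk]; rewrite dvdn_divRL // mulnn.
have w_lt : (w < w.+1 < w.+2)%N by rewrite !ltnSn.
have none_between k k' : (k < k' < k.+1)%N -> p %| f k' %/ p by lia.
have [i [j [wi j_le _ block]]] :=
  sq_zero_block_consecutive_units (f := fun k => f k %/ p) w_lt
    (quot_unit w ltac:(lia)) (quot_unit w.+1 ltac:(lia)) (quot_unit w.+2 ltac:(lia))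
    (@none_between w) (@none_between w.+1).
exists i, j; rewrite addn3; split => //; apply: sq_zero_block_divn block => k k_in.
by have [] := exact_mult k ltac:(lia).
Qed.

Lemma sq_zero_block_nine (f : nat -> nat) :
  exists i j, (i < j <= 9)%N /\ sq_zero_block (p ^ 2) p f i j.
Proof.
case: (boolP [exists k : 'I_9, p ^ 2 %| f k]) => [/existsP [k dvd_fk] | /existsPn no_p2].
  by exists k, k.+1; rewrite ltnSn ltn_ord; split => //; apply: sq_zero_block1.
have window w : (w + 3 <= 9)%N ->
    (exists i j, (i < j <= 9)%N /\ sq_zero_block (p ^ 2) p f i j) \/
    exists2 u, (w <= u < w + 3)%N & ~~ (p %| f u).
  move=> w_le; case: (boolP (all (fun k => p %| f k) (index_iota w (w + 3)))).
    move=> /allP all_mult; left.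
    have [|i [j [/andP [wi ij] j_le block]]] := @sq_zero_block_multiples f w.
      move=> k k_in; split; first by apply: all_mult; rewrite mem_index_iota.
      by have := no_p2 (Ordinal (_ : k < 9)); apply; lia.
    by exists i, j; split => //; apply/andP; split; lia.
  by case/allPn => u; rewrite mem_index_iota; right; exists u.
have [//|[u1 u1_in f1]] := window 0 isT.
have [//|[u2 u2_in f2]] := window 3 isT.
have [//|[u3 u3_in f3]] := window 6 isT.
have [|i [j [/andP [_ ij] j_le block]]] := @sq_zero_block_units f u1 u2 u3 _ f1 f2 f3.
  by apply/andP; split; lia.
by exists i, j; split => //; apply/andP; split; lia.
Qed.

End OddPrime.

Lemma sqr_scaled_in_sq_star (m p s : nat) : prime p -> p %| m -> (1 < m)%N ->
  ~~ (p %| s) -> (((m %/ p * s) ^ 2)%:R : 'Z_(m * m))%R \in sq_star (m * m).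
Proof.
move=> p_pr p_dvd m_gt1 s_unit.
have q_gt0 : (0 < m %/ p)%N by rewrite divn_gt0 ?prime_gt0 // dvdn_leq //; lia.
have not_dvd : ~~ (m * m %| (m %/ p * s) ^ 2).
  by rewrite mulnn -{1}(divnK p_dvd) dvdn_pexp2r // dvdn_pmul2l.
rewrite /sq_star in_setD1; apply/andP; split.
  apply: contra not_dvd => /eqP /(congr1 (@nat_of_ord _)).
  by rewrite val_Zp_nat /= => [/eqP|]; last nia.
by rewrite /sq_set; apply/imsetP; exists (m %/ p * s)%:R%R; rewrite // -natrM mulnn.
Qed.

Lemma weighted_zero_sum_block (m p : nat) (y : seq 'Z_(m * m)) (i j : nat) :
  prime p -> p %| m -> (1 < m)%N -> (j <= size y)%N ->
  sq_zero_block (p ^ 2) p (fun k => nat_of_ord (nth 0%R y k)) i j ->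
  weighted_zero_sum (sq_star (m * m)) (drop i (take j y)).
Proof.
move=> p_pr p_dvd m_gt1 j_le [s s_unit dvd_sum].
pose w k : 'Z_(m * m) := ((m %/ p * s k) ^ 2)%:R%R.
have size_block : size (drop i (take j y)) = j - i by rewrite size_drop size_takel.
exists [seq w k | k <- index_iota i j]; split; first by rewrite size_map size_iota.
split.
  apply/allP => _ /mapP [k k_in ->]; apply: sqr_scaled_in_sq_star => //.
  by apply: s_unit; rewrite -mem_index_iota.
rewrite size_block.
transitivity (\sum_(i <= k < j) w k * y`_k)%R.
  rewrite -[in RHS](add0n i) big_addn big_mkord; apply: eq_bigr => k _.
  rewrite (nth_map 0%N) ?size_iota // nth_iota // nth_drop nth_take (addnC i) //.
  by have := ltn_ord k; lia.
have dvd_total : m * m %| \sum_(i <= k < j) (m %/ p * s k) ^ 2 * nat_of_ord (nth 0%R y k).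
  under eq_bigr do rewrite expnMn -mulnA.
  rewrite -big_distrr /=; apply: (@dvdn_trans ((m %/ p) ^ 2 * p ^ 2)).
    by rewrite -expnMn divnK // mulnn.
  exact: dvdn_mul (dvdnn _) dvd_sum.
have -> : (\sum_(i <= k < j) w k * y`_k)%R =
          (\sum_(i <= k < j) (m %/ p * s k) ^ 2 * nat_of_ord (nth 0%R y k))%:R%R.
  by rewrite natr_sum; apply: eq_bigr => k _; rewrite natrM natr_Zp.
by rewrite -(Zp_nat_mod (_ : 1 < m * m)%N) ?(eqP dvd_total) //; nia.
Qed.

Theorem mainTheorem17 (n : nat) :
  (1 < n)%N -> odd n -> (exists m : nat, n = (m * m)%N) ->
  C_le (sq_star n) 9.
Proof.
move=> n_gt1 n_odd [m n_eq]; subst n.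
have m_gt1 : (1 < m)%N by nia.
have p_pr := pdiv_prime m_gt1.
have p_dvd := pdiv_dvd m.
have p_gt2 : (2 < pdiv m)%N.
  by apply: odd_prime_gt2 p_pr; apply: dvdn_odd n_odd; apply: dvdn_mulr.
exists 9; split => // y size_y.
have [i [j [ij_le block]]] := sq_zero_block_nine p_pr p_gt2 (fun k => nat_of_ord (nth 0%R y k)).
exists i, j; split => //; apply: weighted_zero_sum_block p_pr p_dvd m_gt1 _ block.
by rewrite size_y; case/andP: ij_le.
Qed.
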